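(* Let $(M,\widetilde B)$ be a strict root of unity quantum seed with respect to a skew-symmetric integer matrix $\Lambda\in M_N(\mathbb Z)$, and let $k\in\mathrm{ex}$ and $s\in\{+,-\}$. Then $\mu_k(M,\widetilde B)$ is also a strict root of unity quantum seed, with respect to the skew-symmetric integer matrix $\Lambda'=E_s^\top\Lambda E_s$.
   Context: Let $\ell$ be a positive integer, $\mathbb Z_\ell=\mathbb Z/\ell\mathbb Z$, $\varepsilon^{1/2}\in\mathbb C$ a primitive $\ell$-th root of unity, $\mathcal A^{1/2}_\varepsilon=\mathbb Z[\varepsilon^{1/2}]$, $\varepsilon^{a/2}=(\varepsilon^{1/2})^a$ for $a\in\mathbb Z_\ell$; $\overline C$ is the reduction mod $\ell$ of an integer matrix $C$; $e_1,\dots,e_N$ is the standard basis of $\mathbb Z^N$. For a skew-symmetric bilinear form $\Lambda:\mathbb Z^N\times\mathbb Z^N\to\mathbb Z_\ell$ with matrix $(\lambda_{ij})$, $\mathcal T_\varepsilon(\Lambda)$ is the $\mathcal A^{1/2}_\varepsilon$-algebra with basis $\{X^f\}_{f\in\mathbb Z^N}$ and $X^fX^g=\varepsilon^{\Lambda(f,g)/2}X^{f+g}$. A root of unity toric frame of a division algebra $\mathcal F$ over $\mathbb Q(\varepsilon^{1/2})$ is a map $M:\mathbb Z^N\to\mathcal F$ such that for some (unique) skew-symmetric $\Lambda=:\Lambda_M$ there is an injective $\mathcal A^{1/2}_\varepsilon$-algebra map $\phi:\mathcal T_\varepsilon(\Lambda)\to\mathcal F$, $\phi(X^f)=M(f)$,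 with $\mathcal F$ the skew field of fractions of its image. Fix $\mathrm{ex}\subseteq[1,N]$. An exchange matrix $\widetilde B=(b_{ij})$ is an integer matrix with rows indexed by $[1,N]$, columns by $\mathrm{ex}$, principal part $B$, $k$-th column $b^k$. $(\Lambda,\widetilde B)$ (with $\Lambda$ over $\mathbb Z_\ell$) is $\ell$-compatible with respect to $D=\mathrm{diag}(d_j)_{j\in\mathrm{ex}}$, $d_j\in\mathbb Z_{>0}$, if $DB$ is skew-symmetric and $\sum_k\overline b_{kj}\lambda_{ki}=\delta_{ij}\overline d_j$ in $\mathbb Z_\ell$ for all $i\in[1,N]$, $j\in\mathrm{ex}$; a root of unity quantum seed is $(M,\widetilde B)$ with $(\Lambda_M,\widetilde B)$ $\ell$-compatible. A pair $(\Lambda,\widetilde B)$ with $\Lambda=(\lambda_{ij})\in M_N(\mathbb Z)$ skew-symmetric is compatible with respect to $D$ if $\sum_k b_{kj}\lambda_{ki}=\delta_{ij}d_j$ for all $i\in[1,N]$, $j\in\mathrm{ex}$. A root of unity quantum seed $(M,\widetilde B)$, $\ell$-compatible w.r.t. $D$, is strict with respect to a skew-symmetric $\Lambda\in M_N(\mathbb Z)$ if $\overline\Lambda=\Lambda_M$ and $(\Lambda,\widetilde B)$ is compatible with respect to the same $D$. For a sign $s$, $E_s=(e_{ij})\in M_N(\mathbb Z)$ has $e_{ij}=\delta_{ij}$ for $j\ne k$, $e_{kk}=-1$, $e_{ik}=\max(0,-sb_{ik})$ for $i\ne k$. For $b\in\mathbb Z^N$, $[b]_\pm$ keeps the entries $b_i$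 with $\pm b_i\ge0$ and sets the others to $0$. Mutation: $\mu_k(\widetilde B)=(b'_{ij})$, $b'_{ij}=-b_{ij}$ if $i=k$ or $j=k$, otherwise $b'_{ij}=b_{ij}+(|b_{ik}|b_{kj}+b_{ik}|b_{kj}|)/2$; $\mu_k(M)$ is the root of unity toric frame with matrix $\overline E_s^\top\Lambda_M\overline E_s$ (independent of $s$) and $\mu_k(M)(e_j)=M(e_j)$ ($j\ne k$), $\mu_k(M)(e_k)=M(-e_k+[b^k]_+)+M(-e_k-[b^k]_-)$. *)

From mathcomp Require Import all_boot all_order all_algebra.
Set Implicit Arguments. Unset Strict Implicit. Unset Printing Implicit Defensive.
Import Order.TTheory GRing.Theory Num.Theory.
Local Open Scope ring_scope.

(* Indices [1,N] are modelled by 'I_N; ex : {set 'I_N}.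
   Exchange matrices are stored as N x N integer matrices, of which only the
   columns indexed by ex are meaningful (other columns are ignored by every
   definition below that matters).  D = diag(d_j)_{j in ex} is a function
   'I_N -> int whose values outside ex are irrelevant.
   Elements of Z_l are represented by integers, compared modulo l. *)

Definition congl (l : nat) (a b : int) : Prop := (a == b %[mod l%:Z])%Z.

Definition skewZ (N : nat) (L : 'M[int]_N) : Prop :=
  forall i j, L i j = - L j i.

Definition skew_mod (l N : nat) (L : 'M[int]_N) : Prop :=
  forall i j, congl l (L i j) (- L j i).

Definition DB_skew (N : nat) (ex : {set 'I_N}) (Bt : 'M[int]_N) (D : 'I_N -> int) : Prop :=
  (forall j, j \in ex -> 0 < D j) /\
  (forall i j, i \in ex -> j \in ex -> D i * Bt i j = - (D j * Bt j i)).

Definition compatible (N : nat) (ex : {set 'I_N}) (L Bt : 'M[int]_N) (D : 'I_N -> int) : Prop :=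
  DB_skew ex Bt D /\
  forall i j, j \in ex -> \sum_(k < N) Bt k j * L k i = (i == j)%:R * D j.

Definition l_compatible (l N : nat) (ex : {set 'I_N}) (L Bt : 'M[int]_N) (D : 'I_N -> int) : Prop :=
  DB_skew ex Bt D /\
  forall i j, j \in ex -> congl l (\sum_(k < N) Bt k j * L k i) ((i == j)%:R * D j).

(* A root of unity quantum seed (M, Bt), recorded through the matrix LM of
   Lambda_M (over Z_l, integer representatives) and Bt. *)
Definition rou_seed (l N : nat) (ex : {set 'I_N}) (LM Bt : 'M[int]_N) (D : 'I_N -> int) : Prop :=
  skew_mod l LM /\ l_compatible l ex LM Bt D.

Definition strict_seed (l N : nat) (ex : {set 'I_N}) (LM Bt : 'M[int]_N) (D : 'I_N -> int)
    (L : 'M[int]_N) : Prop :=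
  rou_seed l ex LM Bt D /\ skewZ L /\ (forall i j, congl l (L i j) (LM i j)) /\
  compatible ex L Bt D.

Definition Emat (N : nat) (Bt : 'M[int]_N) (k : 'I_N) (s : bool) : 'M[int]_N :=
  \matrix_(i, j)
    if j != k then (i == j)%:R
    else if i == k then -1
    else Num.max 0 (- ((if s then 1 else -1) * Bt i k)).

Definition mutB (N : nat) (k : 'I_N) (Bt : 'M[int]_N) : 'M[int]_N :=
  \matrix_(i, j)
    if (i == k) || (j == k) then - Bt i j
    else Bt i j + ((`|Bt i k| * Bt k j + Bt i k * `|Bt k j|) %/ 2)%Z.

Definition mutLM (N : nat) (Bt : 'M[int]_N) (k : 'I_N) (s : bool) (LM : 'M[int]_N) : 'M[int]_N :=
  (Emat Bt k s)^T *m LM *m Emat Bt k s.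

From mathcomp Require Import all_boot all_order all_algebra.
From mathcomp Require Import zify ring.
Set Implicit Arguments. Unset Strict Implicit. Unset Printing Implicit Defensive.
Import Order.TTheory GRing.Theory Num.Theory.
Local Open Scope ring_scope.

(* E_s is an involution and mu_k(B) = E_s B F_s, hence
   mu_k(B)^T (E_s^T L E_s) = F_s^T (B^T L) E_s.  By compatibility the rows
   of B^T L indexed by ex are those of D; the row j of F_s^T only involves
   the rows j and k, both in ex, so the product equals F_s^T D E_s on these
   rows, and F_s^T D E_s agrees with D there because
   d_j [-s b_jk]_+ = d_k [s b_kj]_+ (skew-symmetry of DB).  Skew-symmetry and
   the congruence L = L_M (mod l) are preserved by X |-> E_s^T X E_s, and
   l-compatibility of the mutated seed is the reduction mod l of its integer
   compatibility. *)

Section SupportedSums.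

Variables (V : nmodType) (n : nat) (F : 'I_n -> V).

Lemma sum_supp1 x : (forall a, a != x -> F a = 0) -> \sum_a F a = F x.
Proof. by move=> F0; rewrite (bigD1 x) //= big1 ?addr0 // => a /F0. Qed.

Lemma sum_supp2 x y : x != y ->
  (forall a, a != x -> a != y -> F a = 0) -> \sum_a F a = F x + F y.
Proof.
move=> xy F0; rewrite (bigD1 x) //= (bigD1 y) 1?eq_sym //= big1 ?addr0 ?addrA //.
by move=> a /andP[ay ax]; apply: F0.
Qed.

End SupportedSums.

Lemma mulmx_row_supp (R : pzSemiRingType) n p (A : {pred 'I_n})
    (v : 'rV[R]_n) (X Y : 'M[R]_(n, p)) :
  (forall a, a \notin A -> v 0 a = 0) ->
  (forall a, a \in A -> row a X = row a Y) -> v *m X = v *m Y.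
Proof.
move=> v0 XY; rewrite !mulmx_sum_row; apply: eq_bigr => a _.
by case: (boolP (a \in A)) => aA; [rewrite XY | rewrite v0 // !scale0r].
Qed.

Definition congmx (l : nat) m n (A B : 'M[int]_(m, n)) : Prop :=
  forall i j, congl l (A i j) (B i j).

Lemma congmx_mul l m n p q (P : 'M[int]_(m, n)) (A B : 'M[int]_(n, p))
    (Q : 'M[int]_(p, q)) :
  congmx l A B -> congmx l (P *m A *m Q) (P *m B *m Q).
Proof.
move=> AB i j; rewrite /congl eqz_mod_dvd !mxE -sumrB.
apply: rpred_sum => c _; rewrite -mulrBl !mxE -sumrB; apply: dvdz_mulr.
apply: rpred_sum => b _; rewrite -mulrBr; apply: dvdz_mull.
by rewrite -eqz_mod_dvd; apply: AB.
Qed.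

Lemma skewZ_conj N (E L : 'M[int]_N) : skewZ L -> skewZ (E^T *m L *m E).
Proof.
move=> skL; rewrite /skewZ => i j.
have LT : L^T = - L by apply/matrixP => a b; rewrite !mxE skL.
have /matrixP/(_ j i) : (E^T *m L *m E)^T = - (E^T *m L *m E).
  by rewrite !trmx_mul trmxK LT mulNmx mulmxN mulmxA.
by rewrite [LHS]mxE [RHS]mxE.
Qed.

Lemma skew_mod_conj l N (E L : 'M[int]_N) :
  skew_mod l L -> skew_mod l (E^T *m L *m E).
Proof.
move=> skL; rewrite /skew_mod => i j.
have LT : congmx l L^T (- L) by move=> a b; rewrite !mxE; apply: skL.
have := congmx_mul E^T E LT j i.
have -> : E^T *m L^T *m E = (E^T *m L *m E)^T by rewrite !trmx_mul trmxK mulmxA.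
by rewrite mulmxN mulNmx [X in congl _ X _]mxE [X in congl _ _ X]mxE.
Qed.

Lemma DB_skew_diag0 N (ex : {set 'I_N}) (Bt : 'M[int]_N) D j :
  DB_skew ex Bt D -> j \in ex -> Bt j j = 0.
Proof. by case=> Dpos DB jex; have := DB j j jex jex; have := Dpos j jex; nia. Qed.

Definition Dmx N (D : 'I_N -> int) : 'M[int]_N := diag_mx (\row_j D j).

Lemma compatible_rowsE N (ex : {set 'I_N}) (L Bt : 'M[int]_N) D :
  compatible ex L Bt D <->
  DB_skew ex Bt D /\ forall j, j \in ex -> row j (Bt^T *m L) = row j (Dmx D).
Proof.
have rowE j : (forall i, \sum_k Bt k j * L k i = (i == j)%:R * D j) <->
              row j (Bt^T *m L) = row j (Dmx D).
  split=> [H | /matrixP H i].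
    apply/matrixP => z i; rewrite !mxE -mulr_natl eq_sym -H.
    by apply: eq_bigr => m _; rewrite mxE.
  have := H 0 i; rewrite !mxE mulr_natl eq_sym => <-.
  by apply: eq_bigr => m _; rewrite mxE.
split=> -[DB c]; split=> //.
  by move=> j jex; apply/rowE => i; apply: c.
by move=> i j jex; move: i; apply/rowE; apply: c.
Qed.

Lemma compatible_l_compatible l N (ex : {set 'I_N}) (L LM Bt : 'M[int]_N) D :
  compatible ex L Bt D -> congmx l L LM -> l_compatible l ex LM Bt D.
Proof.
move=> [DB c] LLM; split=> // i j jex; rewrite -c // /congl eq_sym eqz_mod_dvd.
rewrite -sumrB; apply: rpred_sum => m _; rewrite -mulrBr; apply: dvdz_mull.
by rewrite -eqz_mod_dvd; apply: LLM.
Qed.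

Lemma divz2_abs_mul (a b : int) :
  ((`|a| * b + a * `|b|) %/ 2)%Z = a * Num.max 0 b + Num.max 0 (- a) * b.
Proof.
have -> : `|a| * b + a * `|b| = (a * Num.max 0 b + Num.max 0 (- a) * b) * 2 by nia.
by rewrite mulzK.
Qed.

Lemma maxr0_pMl (d x : int) : 0 < d -> d * Num.max 0 x = Num.max 0 (d * x).
Proof. by move=> d0; rewrite maxr_pMr ?mulr0 // ltW. Qed.

Section Mutation.

Variables (N : nat) (Bt : 'M[int]_N) (k : 'I_N) (s : bool).

Local Notation sg := (if s then 1 else -1 : int).
Local Notation E := (Emat Bt k s).

Definition Fmat : 'M[int]_N :=
  \matrix_(i, j)
    if i != k then (i == j)%:R
    else if j == k then -1
    else Num.max 0 (sg * Bt k j).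

Lemma Emat_invol : E *m E = 1%:M.
Proof.
apply/matrixP => i j; rewrite !mxE.
have [->|jk] := eqVneq j k; last first.
  rewrite (sum_supp1 (x := j)) => [|a aj]; first by rewrite !mxE jk eqxx mulr1.
  by rewrite [E a j]mxE jk (negPf aj) mulr0.
have [->|ik] := eqVneq i k.
  rewrite (sum_supp1 (x := k)) => [|a ak]; first by rewrite !mxE eqxx.
  by rewrite !mxE ak eqxx /= (eq_sym k a) (negPf ak) mul0r.
rewrite (sum_supp2 (x := i) (y := k)) // => [|a ai ak].
  by rewrite !mxE ik /= !eqxx /= (negPf ik); ring.
by rewrite !mxE ak /= (eq_sym i a) (negPf ai) mul0r.
Qed.

Lemma Emat_mulmxE m c : (E *m Bt) m c =
  if m == k then - Bt k c else Bt m c + Num.max 0 (- (sg * Bt m k)) * Bt k c.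
Proof.
rewrite mxE; have [->|mk] := eqVneq m k.
  rewrite (sum_supp1 (x := k)) => [|a ak]; first by rewrite !mxE eqxx mulN1r.
  by rewrite !mxE ak (eq_sym k a) (negPf ak) mul0r.
rewrite (sum_supp2 (x := m) (y := k)) // => [|a am ak].
  by rewrite !mxE mk /= !eqxx /= (negPf mk) mul1r.
by rewrite !mxE ak /= (eq_sym m a) (negPf am) mul0r.
Qed.

Lemma mutB_EF : Bt k k = 0 -> mutB k Bt = E *m Bt *m Fmat.
Proof.
move=> Bkk; apply/matrixP => m j; rewrite [RHS]mxE.
have sgE (a b : int) : a * Num.max 0 (sg * b) + Num.max 0 (- (sg * a)) * b =
                       a * Num.max 0 b + Num.max 0 (- a) * b.
  by case: (s); rewrite ?mul1r ?mulN1r ?opprK; lia.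
have [->|jk] := eqVneq j k.
  rewrite (sum_supp1 (x := k)) => [|a ak]; last first.
    by rewrite [Fmat _ _]mxE ak (negPf ak) mulr0.
  by rewrite Emat_mulmxE !mxE !eqxx orbT /=; case: eqVneq => [->|_]; rewrite Bkk; ring.
rewrite (sum_supp2 (x := j) (y := k)) // => [|a aj ak]; last first.
  by rewrite [Fmat _ _]mxE ak (negPf aj) mulr0.
rewrite !Emat_mulmxE !mxE !eqxx jk (negPf jk) /= orbF.
have [->|mk] /= := eqVneq m k; rewrite Bkk; first by ring.
by rewrite divz2_abs_mul -sgE; ring.
Qed.

Lemma trmx_mutB_conj (L : 'M[int]_N) : Bt k k = 0 ->
  (mutB k Bt)^T *m (E^T *m L *m E) = Fmat^T *m (Bt^T *m L) *m E.
Proof.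
move=> Bkk; rewrite mutB_EF // !trmx_mul !mulmxA.
by rewrite -(mulmxA _ E^T E^T) -[E^T *m E^T]trmx_mul Emat_invol trmx1 mulmx1.
Qed.

Variables (ex : {set 'I_N}) (D : 'I_N -> int).
Hypotheses (kex : k \in ex) (DB : DB_skew ex Bt D).

Lemma DB_skew_mutB : DB_skew ex (mutB k Bt) D.
Proof.
case: DB => Dpos DBs; split=> // i j iex jex; rewrite !mxE.
have [->|ik] /= := eqVneq i k; first by rewrite orbT !mulrN DBs.
have [->|jk] /= := eqVneq j k; first by rewrite !mulrN DBs.
rewrite !divz2_abs_mul mulrDr [in RHS]mulrDr opprD DBs //; congr (_ + _).
(* Multiplying by d_k > 0 moves d_i, d_j and d_k inside the maxima, where the
   skew-symmetry of DB applies. *)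
have dk := Dpos k kex; apply: (@mulfI _ (D k)); first by rewrite gt_eqF.
have -> : D k * (D i * (Bt i k * Num.max 0 (Bt k j) + Num.max 0 (- Bt i k) * Bt k j))
    = (D i * Bt i k) * Num.max 0 (D k * Bt k j)
      + Num.max 0 (D i * - Bt i k) * (D k * Bt k j).
  by rewrite -!maxr0_pMl ?Dpos //; ring.
have -> : D k * - (D j * (Bt j k * Num.max 0 (Bt k i) + Num.max 0 (- Bt j k) * Bt k i))
    = - ((D j * Bt j k) * Num.max 0 (D k * Bt k i)
         + Num.max 0 (D j * - Bt j k) * (D k * Bt k i)).
  by rewrite -!maxr0_pMl ?Dpos //; ring.
by rewrite !mulrN (DBs i k) // (DBs k j) // !opprK; ring.
Qed.

Lemma Fmat_Dmx_Emat j : j \in ex -> row j (Fmat^T *m Dmx D *m E) = row j (Dmx D).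
Proof.
case: DB => Dpos DBs jex; apply/matrixP => z i; rewrite [LHS]mxE [RHS]mxE mxE.
have FD b : (Fmat^T *m Dmx D) j b = Fmat b j * D b.
  rewrite mxE (sum_supp1 (x := b)) => [|a ab]; first by rewrite !mxE eqxx mulr1n.
  by rewrite [Dmx D a b]mxE (negPf ab) mulr0n mulr0.
under eq_bigr do rewrite FD.
have [jk|jk] := eqVneq j k.
  rewrite jk (sum_supp1 (x := k)) => [|a ak]; last by rewrite !mxE ak (negPf ak) !mul0r.
  rewrite !mxE !eqxx /=; have [_|_] /= := eqVneq i k.
    by rewrite mulr1n; ring.
  by rewrite mulr0 mulr0n.
rewrite (sum_supp2 (x := j) (y := k)) // => [|a aj ak]; last first.
  by rewrite !mxE ak (negPf aj) !mul0r.
rewrite !mxE !eqxx jk (negPf jk) /= mul1r.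
have [->|ik] /= := eqVneq i k.
  rewrite (negPf jk) mulr0n mulrN1.
  have -> : D j * Num.max 0 (- (sg * Bt j k)) = D k * Num.max 0 (sg * Bt k j).
    by rewrite !maxr0_pMl ?Dpos // mulrN mulrCA (DBs j k) //; congr (Num.max 0 _); ring.
  by rewrite mulrC subrr.
by rewrite mulr0 addr0 mulr_natr.
Qed.

Lemma compatible_mut L :
  compatible ex L Bt D -> compatible ex (E^T *m L *m E) (mutB k Bt) D.
Proof.
move=> /compatible_rowsE[_ rowsL]; apply/compatible_rowsE; split.
  exact: DB_skew_mutB.
move=> j jex; rewrite trmx_mutB_conj ?(DB_skew_diag0 DB) // -Fmat_Dmx_Emat //.
rewrite !row_mul; congr (_ *m _); apply: (mulmx_row_supp (A := ex)) => // a aex.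
have aj : a != j by apply: contraNneq aex => ->.
by rewrite !mxE (negPf aj); case: eqVneq => // ak; rewrite ak kex in aex.
Qed.

End Mutation.

Theorem proposition5p2 (l N : nat) (ex : {set 'I_N}) (D : 'I_N -> int)
    (LM Bt L : 'M[int]_N) (k : 'I_N) (s : bool) :
  (0 < l)%N -> k \in ex ->
  strict_seed l ex LM Bt D L ->
  strict_seed l ex (mutLM Bt k s LM) (mutB k Bt) D
    ((Emat Bt k s)^T *m L *m Emat Bt k s).
Proof.
move=> _ kex [[skLM _] [skL [LLM compL]]].
have compL' := compatible_mut s kex compL.1 compL.
have LLM' : congmx l ((Emat Bt k s)^T *m L *m Emat Bt k s) (mutLM Bt k s LM)
  by apply: congmx_mul.
split; first split.
- exact: skew_mod_conj.
- exact: compatible_l_compatible compL' LLM'.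
by split; [apply: skewZ_conj | split].
Qed.
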